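(* Let $s,d,n$ be positive integers. Then the set $\mathrm{Zer}_s(d,n)=\{A\in\Omega_s(d,n):\operatorname{Per}(A)=0\}$ is the union of finitely many (convex) polytopes.
   Context: For a positive integer $n$ let $I_n=\{1,\dots,n\}$. A $d$-dimensional matrix of order $n$ is a function $A:I_n^d\to\mathbb R$; write $M(d,n)$ for the set of these. A $k$-plane of $A$ is the restriction of $A$ to $L_1\times\cdots\times L_d$ with each $L_i\subseteq I_n$ satisfying $|L_i|\in\{1,n\}$ and exactly $k$ of the $L_i$ equal to $I_n$; a $(d-1)$-plane is a hyperplane. A diagonal of $A$ is a selection of $n$ entries of $A$, no two in the same hyperplane (equivalently, $n$ positions any two of which differ in every coordinate). The permanent $\operatorname{Per}(A)$ is the sum over all diagonals of the product of the $n$ entries of the diagonal (an empty sum is $0$). A non-negative $A\in M(d,n)$ is $s$-polystochastic if the sum of the entries in every $s$-plane equals $1$; $\Omega_s(d,n)$ denotes the set of $s$-polystochastic matrices in $M(d,n)$ (a convex polytope). *)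

From HB Require Import structures.
From mathcomp Require Import all_boot all_order all_algebra.
From mathcomp Require Import reals.
Set Implicit Arguments. Unset Strict Implicit. Unset Printing Implicit Defensive.
Import Order.TTheory GRing.Theory Num.Theory.
Local Open Scope ring_scope.

(* Positions of a d-dimensional matrix of order n: elements of I_n^d,
   encoded as functions 'I_d -> 'I_n (index i < n stands for i+1). *)
Definition pos (d n : nat) := {ffun 'I_d -> 'I_n}.

Definition mat (R : realType) (d n : nat) := {ffun pos d n -> R}.

(* The k-plane with free coordinate set K (#|K| = k) through position c:
   the positions agreeing with c on every coordinate outside K. *)
Definition in_plane (d n : nat) (K : {set 'I_d}) (c x : pos d n) : bool :=
  [forall i, (i \notin K) ==> (x i == c i)].

Definition polystochastic (R : realType) (s d n : nat) (A : mat R d n) : Prop :=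
  (forall x, 0 <= A x) /\
  (forall (K : {set 'I_d}), #|K| = s ->
     forall c : pos d n, \sum_(x | in_plane K c x) A x = 1).

Definition is_diagonal (d n : nat) (D : {set pos d n}) : bool :=
  (#|D| == n) &&
  [forall x in D, forall y in D, (x != y) ==> [forall i, x i != y i]].

Definition Per (R : realType) (d n : nat) (A : mat R d n) : R :=
  \sum_(D : {set pos d n} | is_diagonal D) \prod_(x in D) A x.

Definition Zer (R : realType) (s d n : nat) (A : mat R d n) : Prop :=
  polystochastic s A /\ Per A = 0.

Definition in_conv (R : realType) (d n : nat) (P : seq (mat R d n))
    (A : mat R d n) : Prop :=
  exists w : 'I_(size P) -> R,
    (forall i, 0 <= w i) /\ \sum_i w i = 1 /\
    forall x, A x = \sum_i w i * (nth 0 P i) x.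

(* A nonnegative matrix has zero permanent iff its zero set meets every
   diagonal.  Hence Zer_s(d,n) is the union, over the finitely many sets Z
   of positions meeting every diagonal, of the faces
   {A in Omega_s(d,n) : A = 0 on Z}.  Each face is a polyhedron
   {x >= 0 : a x = b} with no nonzero y >= 0 such that a y = 0 (every entry
   lies in an s-plane), and such a polyhedron is the convex hull of its
   basic points, one per support: by induction on the support, a
   non-basic feasible x can be pushed both ways along a kernel vector
   supported in supp x until a coordinate vanishes, which writes x as a
   convex combination of two feasible points of smaller support. *)

From HB Require Import structures.
From mathcomp Require Import all_boot all_order all_algebra.
From mathcomp Require Import reals boolp.
From mathcomp Require Import ring.
Set Implicit Arguments. Unset Strict Implicit. Unset Printing Implicit Defensive.
Import Order.TTheory GRing.Theory Num.Theory.
Local Open Scope ring_scope.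

Definition conv (R : realType) (I : finType) (V : seq {ffun I -> R})
    (x : {ffun I -> R}) : Prop :=
  exists w : 'I_(size V) -> R,
    (forall k, 0 <= w k) /\ \sum_k w k = 1 /\
    forall i, x i = \sum_k w k * (nth 0 V k) i.

Section ConvexHull.
Variables (R : realType) (I : finType) (V : seq {ffun I -> R}).

Lemma conv_mem x : x \in V -> conv V x.
Proof.
move=> xV; pose k0 : 'I_(size V) := Ordinal (etrans (index_mem x V) xV).
exists (fun k => (k == k0)%:R); split; first by move=> k; rewrite ler0n.
split; first by rewrite (bigD1 k0) //= eqxx big1 ?addr0 // => k /negbTE ->.
move=> i; rewrite (bigD1 k0) //= eqxx mul1r nth_index // big1 ?addr0 //.
by move=> k /negbTE ->; rewrite mul0r.
Qed.

Lemma conv_comb x1 x2 (t : R) : conv V x1 -> conv V x2 -> 0 <= t <= 1 ->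
  conv V [ffun i => t * x1 i + (1 - t) * x2 i].
Proof.
move=> [w1 [w1_ge0 [w1_sum w1x]]] [w2 [w2_ge0 [w2_sum w2x]]] /andP[t_ge0 t_le1].
exists (fun k => t * w1 k + (1 - t) * w2 k); split.
  by move=> k; rewrite addr_ge0 ?mulr_ge0 ?subr_ge0.
split; first by rewrite big_split /= -!mulr_sumr w1_sum w2_sum !mulr1 subrKC.
move=> i; rewrite ffunE w1x w2x !mulr_sumr -big_split /=.
by apply: eq_bigr => k _; rewrite [RHS]mulrDl !mulrA.
Qed.

End ConvexHull.

Lemma ratio_test (R : realType) (T : finType) (x y : T -> R) :
  (forall i, 0 <= x i) -> (forall i, x i = 0 -> y i = 0) -> (exists i, y i < 0) ->
  exists2 t, 0 < t &
    (forall i, 0 <= x i + t * y i) /\ exists2 i, x i != 0 & x i + t * y i = 0.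
Proof.
move=> x_ge0 supp_y [i0 yi0_lt0].
have [i yi_lt0 i_min] :=
  @arg_minP _ R T i0 (fun i => y i < 0) (fun i => x i / - y i) yi0_lt0.
have xi_neq0 : x i != 0 by apply: contraTneq yi_lt0 => /supp_y ->; rewrite ltxx.
have xi_gt0 : 0 < x i by rewrite lt_def xi_neq0 x_ge0.
have Nyi_gt0 : 0 < - y i by rewrite oppr_gt0.
exists (x i / - y i); first by rewrite divr_gt0.
split; last by exists i; rewrite // -[X in _ * X]opprK mulrN divfK ?subrr ?lt0r_neq0.
move=> j; have [yj_lt0 | yj_ge0] := ltP (y j) 0; last first.
  by rewrite addr_ge0 // mulr_ge0 // ltW // divr_gt0.
have : x i / - y i * - y j <= x j by rewrite -ler_pdivlMr ?oppr_gt0 ?i_min.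
by rewrite mulrN -subr_ge0 opprK.
Qed.

Section StandardFormPolyhedron.
Variables (R : realType) (I J : finType) (a : J -> I -> R) (b : J -> R).

Definition feasible (x : {ffun I -> R}) : Prop :=
  (forall i, 0 <= x i) /\ forall j, \sum_i a j i * x i = b j.

Definition homogeneous (y : {ffun I -> R}) : Prop :=
  forall j, \sum_i a j i * y i = 0.

Definition supp (x : {ffun I -> R}) : {set I} := [set i | x i != 0].

Lemma suppN y : supp (- y) = supp y.
Proof. by apply/setP => i; rewrite !inE ffunE oppr_eq0. Qed.

Definition basic (x : {ffun I -> R}) : Prop :=
  feasible x /\ forall y, homogeneous y -> supp y \subset supp x -> y = 0.

Lemma homogeneousB x x' : feasible x -> feasible x' -> homogeneous (x - x').
Proof.
move=> [_ ax] [_ ax'] j; under eq_bigr do rewrite !ffunE mulrBr.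
by rewrite sumrB ax ax' subrr.
Qed.

Lemma homogeneousN y : homogeneous y -> homogeneous (- y).
Proof.
move=> ay j; under eq_bigr do rewrite ffunE mulrN.
by rewrite sumrN ay oppr0.
Qed.

Lemma feasible_shift x y t : feasible x -> homogeneous y ->
  (forall i, 0 <= x i + t * y i) -> feasible [ffun i => x i + t * y i].
Proof.
move=> [_ ax] ay shift_ge0; split=> [i | j]; first by rewrite ffunE.
under eq_bigr do rewrite ffunE mulrDr mulrCA.
by rewrite big_split /= -mulr_sumr ay mulr0 addr0 ax.
Qed.

Lemma conv_feasible V x :
  (forall v, v \in V -> feasible v) -> conv V x -> feasible x.
Proof.
move=> V_feas [w [w_ge0 [w_sum wx]]].
have feas_k (k : 'I_(size V)) : feasible (nth 0 V k) by apply/V_feas/mem_nth.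
split=> [i | j].
  by rewrite wx sumr_ge0 // => k _; rewrite mulr_ge0 // (feas_k k).1.
under eq_bigr do rewrite wx mulr_sumr.
rewrite exchange_big /= -[b j]mul1r -w_sum mulr_suml.
apply: eq_bigr => k _; rewrite -(feas_k k).2 mulr_sumr.
by apply: eq_bigr => i _; rewrite mulrCA.
Qed.

Lemma basic_uniq x x' : basic x -> feasible x' -> supp x' \subset supp x -> x' = x.
Proof.
move=> [fx x_min] fx' supp_x'; apply/eqP; rewrite -subr_eq0; apply/eqP.
apply: x_min; first exact: homogeneousB.
apply/subsetP => i; rewrite inE !ffunE => diff_neq0.
have [xi0 | ] := eqVneq (x i) 0; last by rewrite inE.
by apply: (subsetP supp_x'); rewrite inE; move: diff_neq0; rewrite xi0 subr0.
Qed.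

Lemma basic_finite : exists V : seq {ffun I -> R},
  (forall v, v \in V -> basic v) /\ (forall x, basic x -> x \in V).
Proof.
(* By [basic_uniq], each support carries at most one basic point. *)
have /fin_all_exists [f fP] (S : {set I}) : exists o : option {ffun I -> R},
    (forall v, o = Some v -> basic v) /\ (forall x, basic x -> supp x = S -> o = Some x).
  have [[x [bx <-]] | no_basic] := pselect (exists x, basic x /\ supp x = S).
    exists (Some x); split=> [v [<-] // | x' bx' supp_x'].
    by rewrite (basic_uniq bx bx'.1) ?supp_x'.
  by exists None; split=> // x bx supp_x; case: no_basic; exists x.
exists (pmap f (enum {set I})); split=> [v | x bx]; rewrite mem_pmap.
  by case/mapP=> S _ /esym/(fP S).1.
by apply/mapP; exists (supp x); rewrite ?mem_enum // ((fP _).2 x bx).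
Qed.

Hypothesis bounded :
  forall y, homogeneous y -> (forall i, 0 <= y i) -> y = 0.

Lemma homogeneous_neg_coord y : homogeneous y -> y != 0 -> exists i, y i < 0.
Proof.
move=> ay; apply: contraNP => no_neg; apply/eqP/bounded => // i.
by rewrite leNgt; apply/negP => yi_lt0; apply: no_neg; exists i.
Qed.

Lemma shrink_support x y : feasible x -> homogeneous y -> y != 0 ->
  supp y \subset supp x ->
  exists2 t, 0 < t & feasible [ffun i => x i + t * y i] /\
                     supp [ffun i => x i + t * y i] \proper supp x.
Proof.
move=> fx ay y_neq0 supp_y.
have supp_y' i : x i = 0 -> y i = 0.
  move=> xi0; apply/eqP; have := contra (subsetP supp_y i).
  by rewrite !inE xi0 eqxx !negbK; apply.
have [t t_gt0 [shift_ge0 [i xi_neq0 shift_i]]] :=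
  ratio_test fx.1 supp_y' (homogeneous_neg_coord ay y_neq0).
exists t => //; split; first exact: feasible_shift.
apply/properP; split.
  apply/subsetP => j; rewrite !inE ffunE; apply: contraNN => /eqP xj0.
  by rewrite xj0 supp_y' // mulr0 addr0.
by exists i; rewrite !inE ?ffunE ?shift_i ?eqxx.
Qed.

Lemma feasible_conv_basic V :
  (forall x, basic x -> x \in V) -> forall x, feasible x -> conv V x.
Proof.
move=> basic_V x; have [k] := ubnP #|supp x|; elim: k x => // k IH x.
rewrite ltnS => supp_le fx.
have [/basic_V/conv_mem // | not_basic] := pselect (basic x).
have [y [ay y_neq0 supp_y]] :
    exists y, [/\ homogeneous y, y != 0 & supp y \subset supp x].
  apply: contra_notP not_basic => no_dir; split=> // y ay supp_y.
  by apply: contra_notP no_dir => /eqP y_neq0; exists y.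
have Ny_neq0 : - y != 0 by rewrite oppr_eq0.
have supp_Ny : supp (- y) \subset supp x by rewrite suppN.
have [t1 t1_gt0 [f1 lt1]] := shrink_support fx ay y_neq0 supp_y.
have [t2 t2_gt0 [f2 lt2]] :=
  shrink_support fx (homogeneousN ay) Ny_neq0 supp_Ny.
have IH_lt x' : supp x' \proper supp x -> feasible x' -> conv V x'.
  by move=> /proper_card lt_x'; apply: IH; apply: leq_trans lt_x' supp_le.
have t12_gt0 : 0 < t1 + t2 by rewrite addr_gt0.
(* x divides the segment from x + t1 y to x - t2 y in the ratio t1 : t2. *)
have := conv_comb (IH_lt _ lt1 f1) (IH_lt _ lt2 f2) (t := t2 / (t1 + t2)).
have -> : [ffun i => t2 / (t1 + t2) * [ffun i => x i + t1 * y i] i +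
    (1 - t2 / (t1 + t2)) * [ffun i => x i + t2 * (- y) i] i] = x.
  by apply/ffunP => i; rewrite !ffunE; field; rewrite lt0r_neq0.
apply; apply/andP; split; first by rewrite divr_ge0 ?ltW.
by rewrite ler_pdivrMr // mul1r lerDr ltW.
Qed.

Lemma feasible_polytope : exists V, forall x, feasible x <-> conv V x.
Proof.
have [V [V_basic basic_V]] := basic_finite.
exists V => x; split; first exact: feasible_conv_basic.
by apply: conv_feasible => v /V_basic [].
Qed.

End StandardFormPolyhedron.

Lemma finite_union_polytopes (R : realType) (I T : finType) (Q : pred T)
    (P : T -> {ffun I -> R} -> Prop) :
  (forall t, exists V, forall x, P t x <-> conv V x) ->
  exists Ps : seq (seq {ffun I -> R}),
    forall x, (exists2 t, Q t & P t x) <-> exists2 V, V \in Ps & conv V x.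
Proof.
case/fin_all_exists=> V VP; exists [seq V t | t <- enum T & Q t] => x; split.
  by case=> t Qt /VP Vx; exists (V t); rewrite // map_f // mem_filter Qt mem_enum.
by case=> W /mapP [t]; rewrite mem_filter mem_enum andbT => Qt -> /VP; exists t.
Qed.

Lemma sum_mul_indicator (R : ringType) (I : finType) (P : pred I) (F : I -> R) :
  \sum_i (P i)%:R * F i = \sum_(i | P i) F i.
Proof. by rewrite [RHS]big_mkcond; apply: eq_bigr => i _; rewrite mulr_natl mulrb. Qed.

Section PolystochasticFace.
Variables (R : realType) (s d n : nat) (Z : {set pos d n}).

(* One equation for each s-plane (free coordinates K, through c) and one
   forcing each entry in Z to vanish. *)
Local Notation face_eqn :=
  ({K : {set 'I_d} | #|K| == s} * pos d n + {z : pos d n | z \in Z})%type.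

Definition face_coef (j : face_eqn) (x : pos d n) : R :=
  match j with
  | inl (K, c) => (in_plane (val K) c x)%:R
  | inr z => (x == val z)%:R
  end.

Definition face_rhs (j : face_eqn) : R := if j is inl _ then 1 else 0.

Lemma feasible_faceE (A : mat R d n) :
  feasible face_coef face_rhs A <->
  polystochastic s A /\ {in Z, forall z, A z = 0}.
Proof.
split=> [[A_ge0 A_eqn] | [[A_ge0 A_planes] A_Z]].
  split; first split=> // [K /eqP sK c].
    by have := A_eqn (inl (exist _ K sK, c)); rewrite /= sum_mul_indicator.
  move=> z zZ; have := A_eqn (inr (exist _ z zZ)).
  by rewrite /= sum_mul_indicator big_pred1_eq.
split=> // [[[[K sK] c] | [z zZ]]]; rewrite /= sum_mul_indicator ?big_pred1_eq.
  exact/A_planes/eqP.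
exact: A_Z.
Qed.

Lemma face_bounded : (s <= d)%N ->
  forall y, homogeneous face_coef y -> (forall x, 0 <= y x) -> y = 0.
Proof.
move=> le_sd y y_eqn y_ge0.
have : (0 < #|[set K : {set 'I_d} | #|K| == s]|)%N.
  by rewrite card_draws card_ord bin_gt0.
case/card_gt0P=> K; rewrite inE => sK; apply/ffunP => x; rewrite ffunE.
have := y_eqn (inl (exist _ K sK, x)); rewrite /= sum_mul_indicator.
by move/psumr_eq0P; apply=> //; apply/forallP => i; apply/implyP.
Qed.

Lemma face_polytope : (s <= d)%N -> exists V,
  forall A : mat R d n, polystochastic s A /\ {in Z, forall z, A z = 0} <-> conv V A.
Proof.
move=> le_sd; have [V VP] := feasible_polytope face_rhs (face_bounded le_sd).
by exists V => A; split=> [/feasible_faceE/VP | /VP/feasible_faceE].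
Qed.

End PolystochasticFace.

Definition meets_diagonals (d n : nat) (Z : {set pos d n}) : bool :=
  [forall D : {set pos d n}, is_diagonal D ==> [exists x in D, x \in Z]].

Lemma Per_eq0_meets (R : realType) (d n : nat) (A : mat R d n) :
  (forall x, 0 <= A x) -> Per A = 0 -> meets_diagonals [set x | A x == 0].
Proof.
move=> A_ge0 Per0; apply/forallP => D; apply/implyP => D_diag.
have prod_ge0 D' : is_diagonal D' -> 0 <= \prod_(x in D') A x.
  by move=> _; apply: prodr_ge0.
have /eqP := psumr_eq0P prod_ge0 Per0 D_diag.
by case/prodf_eq0 => x xD Ax0; apply/existsP; exists x; rewrite xD inE.
Qed.

Lemma Per_eq0_of_meets (R : realType) (d n : nat) (A : mat R d n) Z :
  meets_diagonals Z -> {in Z, forall z, A z = 0} -> Per A = 0.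
Proof.
move=> /forallP Z_meets A_Z; rewrite /Per big1 // => D /(implyP (Z_meets D)).
by case/existsP=> x /andP[xD xZ]; rewrite (bigD1 x) //= A_Z // mul0r.
Qed.

Lemma ZerE (R : realType) (s d n : nat) (A : mat R d n) :
  Zer s A <-> exists2 Z, meets_diagonals Z &
                         polystochastic s A /\ {in Z, forall z, A z = 0}.
Proof.
split=> [[A_poly Per0] | [Z Z_meets [A_poly A_Z]]].
  exists [set x | A x == 0]; first exact: Per_eq0_meets A_poly.1 Per0.
  by split=> // x /[!inE]/eqP.
by split=> //; apply: Per_eq0_of_meets Z_meets A_Z.
Qed.

Theorem lemma2p1 (R : realType) (s d n : nat) :
  (0 < s)%N -> (0 < d)%N -> (0 < n)%N -> (s <= d)%N ->
  exists Ps : seq (seq (mat R d n)),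
    forall A : mat R d n, Zer s A <-> (exists2 P, P \in Ps & in_conv P A).
Proof.
move=> _ _ _ le_sd.
have [Ps PsP] := finite_union_polytopes (@meets_diagonals d n)
  (fun Z => face_polytope R Z le_sd).
by exists Ps => A; split=> [/ZerE/PsP | /PsP/ZerE].
Qed.
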